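(* Let $G$ be a finite abelian group with $|G|>1$, let $p(G)$ be the smallest prime dividing $|G|$, and let $S\subset G$ with $|S|\leqslant\log_2p(G)$. Then one can assign to each non-empty subset $X\subseteq S$ an element $s_X\in X$ with the following property. For all non-empty $X,Y\subseteq S$, the only solution of $x+y=s_X+s_Y$ with $x\in X$ and $y\in Y$ is $(x,y)=(s_X,s_Y)$. *)

From mathcomp Require Import all_boot all_order all_algebra.
Set Implicit Arguments. Unset Strict Implicit. Unset Printing Implicit Defensive.

From mathcomp Require Import all_boot all_order all_algebra fingroup cyclic.
Import GRing.Theory Num.Theory Order.TTheory.
Local Open Scope ring_scope.
Set Implicit Arguments. Unset Strict Implicit. Unset Printing Implicit Defensive.

(* Enumerate S as g : 'I_k -> G and look for a weight w : 'I_k -> Q that is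
   injective and a Freiman 2-homomorphism (g a + g b = g c + g d implies
   w a + w b = w c + w d); then s_X := the element of X of largest weight works,
   since x + y = s_X + s_Y forces w x + w y = w s_X + w s_Y with w x <= w s_X
   and w y <= w s_Y.
   Freiman weights form the rational kernel of the integer matrix whose rows are
   the relations e_a + e_b - e_c - e_d.  If none separated x from y, then
   e_x - e_y would lie in its row space, and Cramer's rule would write
   D (e_x - e_y) as an integer combination of relations, D a nonzero square
   minor.  Each row is a sum of two rows of an oriented incidence matrix, which
   is totally unimodular, so 0 < |D| <= 2^k < p(G).  Evaluating at g turns the
   combination into D (g x - g y) = 0 in G, and D is prime to |G|, so g x = g y.
   A generic rational combination of separating weights separates all pairs. *)

Lemma det_eq0_mulmx_const1 (R : idomainType) n (A : 'M[R]_n.+1) :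
  A *m (const_mx 1 : 'cV_n.+1) = 0 -> \det A = 0.
Proof.
move=> A1; have := congr1 (mulmx (\adj A)) A1.
rewrite mulmxA mul_adj_mx mul_scalar_mx mulmx0 => /matrixP/(_ 0 0).
by rewrite !mxE mulr1.
Qed.

Definition incidence_mx {R : pzRingType} n (a b : 'I_n -> option 'I_n) : 'M[R]_n :=
  \matrix_(i, j) ((Some j == a i)%:R - (Some j == b i)%:R).

Lemma sum_eq_Some (R : pzSemiRingType) n (c : 'I_n) :
  \sum_j ((Some j == Some c)%:R : R) = 1.
Proof.
rewrite (bigD1 c) //= eqxx big1 ?addr0 // => j /negbTE jc.
by rewrite (inj_eq Some_inj) jc.
Qed.

Lemma eq_Some_obind_unlift n (j : 'I_n.+1) (c : 'I_n) (a : option 'I_n.+1) :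
  (Some c == obind (unlift j) a) = (Some (lift j c) == a).
Proof.
case: a => [a|] //=; case: unliftP => [a'|] -> /=.
  by rewrite !(inj_eq Some_inj) (inj_eq (@lift_inj _ _)).
by rewrite (inj_eq Some_inj); apply/esym/negbTE; rewrite eq_sym; exact: neq_lift.
Qed.

Lemma minor_incidence_mx (R : pzRingType) n (a b : 'I_n.+1 -> option 'I_n.+1) i j :
  row' i (col' j (incidence_mx a b : 'M[R]_n.+1)) =
  incidence_mx (fun i' => obind (unlift j) (a (lift i i')))
               (fun i' => obind (unlift j) (b (lift i i'))).
Proof. by apply/matrixP => i' j'; rewrite !mxE !eq_Some_obind_unlift. Qed.

Section IncidenceMatrix.
Variable R : numDomainType.

Lemma norm_row_incidence_mx_le1 n (a b : 'I_n -> option 'I_n) i :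
  [|| a i == None, b i == None | a i == b i] ->
  \sum_j `|(incidence_mx a b : 'M[R]_n) i j| <= 1.
Proof.
under eq_bigr => j _ do rewrite mxE.
case/or3P=> /eqP abi; rewrite ?abi.
- case: (b i) => [c|]; last by rewrite big1 // => j _; rewrite subrr normr0.
  by under eq_bigr => j _ do rewrite sub0r normrN normr_nat; rewrite sum_eq_Some.
- case: (a i) => [c|]; last by rewrite big1 // => j _; rewrite subrr normr0.
  by under eq_bigr => j _ do rewrite subr0 normr_nat; rewrite sum_eq_Some.
- by rewrite big1 // => j _; rewrite subrr normr0.
Qed.

Lemma det_incidence_mx_le1 n (a b : 'I_n -> option 'I_n) :
  `|\det (incidence_mx a b : 'M[R]_n)| <= 1.
Proof.
elim: n a b => [|n IHn] a b; first by rewrite det_mx00 normr1.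
have [i degenerate_i|proper_rows] :=
  pickP [pred i | [|| a i == None, b i == None | a i == b i]].
  rewrite (expand_det_row _ i).
  apply: le_trans (ler_norm_sum _ _ _) _.
  apply: le_trans (norm_row_incidence_mx_le1 degenerate_i).
  apply: ler_sum => j _; rewrite normrM ler_piMr //.
  by rewrite /cofactor normrM normrX normrN1 expr1n mul1r minor_incidence_mx.
rewrite det_eq0_mulmx_const1 ?normr0 //.
apply/colP => i; rewrite !mxE.
under eq_bigr => j _ do rewrite !mxE mulr1.
move: (proper_rows i) => /=; case: (a i) (b i) => [c|] [d|] //= _.
by rewrite sumrB !sum_eq_Some subrr.
Qed.

Lemma det_add_incidence_mx_le n (a1 b1 a2 b2 : 'I_n -> option 'I_n) :
  `|\det (incidence_mx a1 b1 + incidence_mx a2 b2 : 'M[R]_n)| <= 2 ^+ n.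
Proof.
pose M (I : {set 'I_n}) a b : 'M[R]_n :=
  \matrix_(i, j) (incidence_mx a b i j + (i \in I)%:R * incidence_mx a2 b2 i j).
suff M_le s (I : {set 'I_n}) a b : #|I| = s -> `|\det (M I a b)| <= 2 ^+ s.
  have -> : incidence_mx a1 b1 + incidence_mx a2 b2 = M setT a1 b1.
    by apply/matrixP => i j; rewrite !mxE inE mul1r.
  by rewrite (M_le n) // cardsT card_ord.
elim: s I a b => [|s IHs] I a b cardI.
  have -> : M I a b = incidence_mx a b.
    apply/matrixP => i j; move/eqP: cardI; rewrite cards_eq0 => /eqP ->.
    by rewrite !mxE inE mul0r addr0.
  exact: det_incidence_mx_le1.
have [i0 Ii0] : exists i0, i0 \in I.
  by apply/set0Pn; rewrite -card_gt0 cardI.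
(* Split row [i0] by multilinearity; both halves lose [i0] from [I]. *)
pose a' i := if i == i0 then a2 i0 else a i.
pose b' i := if i == i0 then b2 i0 else b i.
rewrite (@determinant_multilinear _ _ _ (M (I :\ i0) a b) (M (I :\ i0) a' b')
   i0 1 1); first last.
- apply/matrixP => i j; rewrite !mxE !inE /a' /b' [lift _ _ == _]eq_sym.
  by rewrite (negbTE (neq_lift _ _)).
- by apply/matrixP => i j; rewrite !mxE !inE [lift _ _ == _]eq_sym neq_lift.
- apply/rowP => j; rewrite !mxE !inE eqxx Ii0 /= !mul0r !addr0 !mul1r.
  by rewrite /a' /b' eqxx.
- have cardI' : #|I :\ i0| = s by move: cardI; rewrite (cardsD1 i0) Ii0 => -[].
  rewrite !mul1r exprS mulr2n mulrDl !mul1r.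
  by apply: le_trans (ler_normD _ _) _; apply: lerD; apply: IHs.
Qed.

End IncidenceMatrix.

Lemma submx_Cramer (F : fieldType) m n (A : 'M[F]_(m, n)) (v : 'rV_n) :
  (v <= A)%MS ->
  exists r (f : 'I_r -> 'I_m) (h : 'I_r -> 'I_n),
    [/\ injective h, \det (mxsub f h A) != 0 &
        \det (mxsub f h A) *: v = colsub h v *m \adj (mxsub f h A) *m rowsub f A].
Proof.
move=> vA; set f := maxrankfun A; set B := rowsub f A.
have [lam ->] : exists lam, v = lam *m B by apply/submxP; rewrite eq_maxrowsub.
have fullBT : row_full B^T by rewrite /row_full mxrank_tr; apply: maxrowsub_free.
set h := fullrankfun fullBT.
have M_unit : mxsub f h A \in unitmx.
  rewrite -unitmx_tr; have := fullrowsub_unit fullBT.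
  by congr (_ \in unitmx); apply/matrixP => i j; rewrite !mxE.
exists _, f, h; split; first exact: fullrankfun_inj.
  by rewrite -unitfE -unitmxE.
rewrite -mulmx_colsub mxsubcr -[lam *m _ *m _]mulmxA mul_mx_adj.
by rewrite mul_mx_scalar scalemxAl.
Qed.

Lemma not_submx_kernel_col (F : fieldType) m n (A : 'M[F]_(m, n)) (v : 'rV_n) :
  ~~ (v <= A)%MS -> exists w : 'cV_n, A *m w = 0 /\ (v *m w) 0 0 != 0.
Proof.
rewrite submxE => vC_neq0.
have [j vCj] : exists j, (v *m cokermx A) 0 j != 0.
  apply/existsP; apply: contraR vC_neq0 => /existsPn vC0.
  by apply/eqP/rowP => j; rewrite [RHS]mxE; apply/eqP/negPn; exact: vC0.
exists (col j (cokermx A)).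
by rewrite colE; split; rewrite mulmxA ?mulmx_coker ?mul0mx // -colE mxE.
Qed.

Lemma int_submx_Cramer m n (A : 'M[int]_(m, n)) (v : 'rV_n) :
  (map_mx intr v <= map_mx (intr : int -> rat) A)%MS ->
  exists r (f : 'I_r -> 'I_m) (h : 'I_r -> 'I_n) (mu : 'rV_r),
    [/\ injective h, \det (mxsub f h A) != 0 &
        \det (mxsub f h A) *: v = mu *m rowsub f A].
Proof.
case/submx_Cramer => r [f [h [h_inj detN0 Cramer]]].
exists r, f, h, (colsub h v *m \adj (mxsub f h A)).
rewrite -map_mxsub det_map_mx intr_eq0 in detN0; split=> //.
apply/matrixP => i j; apply: (@intr_inj rat); move/matrixP/(_ i j): Cramer.
by rewrite -!map_mxsub -map_mx_adj -!map_mxM det_map_mx -map_mxZ !mxE.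
Qed.

Lemma coprime_lt_pdiv d N : (0 < d < pdiv N)%N -> coprime d N.
Proof.
case/andP=> d_gt0 d_lt; apply: contraT => not_coprime.
have gcd_gt1 : (1 < gcdn d N)%N.
  by rewrite ltn_neqAle eq_sym not_coprime gcdn_gt0 d_gt0.
have q_dvd := pdiv_dvd (gcdn d N).
have pdivN_le : (pdiv N <= pdiv (gcdn d N))%N.
  apply: pdiv_min_dvd; first exact/prime_gt1/pdiv_prime.
  exact: dvdn_trans q_dvd (dvdn_gcdr _ _).
have q_le : (pdiv (gcdn d N) <= d)%N.
  exact: dvdn_leq d_gt0 (dvdn_trans q_dvd (dvdn_gcdl _ _)).
by rewrite ltnNge (leq_trans pdivN_le q_le) in d_lt.
Qed.

Lemma pow2_lt_prime n p : (1 < n)%N -> prime p -> (2 ^ n <= p)%N -> (2 ^ n < p)%N.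
Proof.
move=> n_gt1 p_prime; rewrite leq_eqVlt => /orP[/eqP pow_eq|//].
have /(@prime_nt_dvdP 2 _ p_prime isT) two_eq : (2 %| p)%N.
  by rewrite -pow_eq dvdn_exp // ltnW.
have := leq_exp2l 2 n (isT : (1 < 2)%N).
by rewrite pow_eq -two_eq leqNgt expnS expn1 n_gt1.
Qed.

Lemma coprime_card_mulrz_eq0 (G : finZmodType) (a : G) (m : int) :
  coprime `|m| #|G| -> a *~ m = 0 -> a = 0.
Proof.
move=> m_coprime am0.
have am0' : a *+ `|m| = 0.
  move: am0; case: (intP m) => [|k|k]; rewrite ?pmulrn // mulrNz.
  by move/eqP; rewrite oppr_eq0 => /eqP.
have : (#[a]%g %| gcdn `|m| #|G|)%N.
  rewrite dvdn_gcd order_dvdn FinRing.zmodXgE am0' eqxx /=.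
  by rewrite -cardsT order_dvdG ?inE.
by rewrite (eqP m_coprime) dvdn1 order_eq1 => /eqP.
Qed.

Lemma exists_scale_nonvanishing (I : finType) (R : numFieldType) (a b : I -> R) :
  exists c : R, forall i, (a i != 0) || (b i != 0) -> a i + c * b i != 0.
Proof.
(* [c] exceeds every [|a i / b i|], so it is none of the roots [- a i / b i]. *)
pose c := 1 + \sum_i `|a i / b i|.
have c_gt i : `|a i / b i| < c.
  rewrite /c (bigD1 i) //= addrCA ltrDl ltr_pwDl //.
  by apply: sumr_ge0 => j _.
exists c => i; have [->|bi0 _] := eqVneq (b i) 0; first by rewrite orbF mulr0 addr0.
apply/eqP => /(canRL (addKr _)); rewrite addr0 => /(canRL (mulfK bi0)).
rewrite mulNr => c_eq; have := c_gt i.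
by rewrite -normrN -c_eq ger0_norm ?ltxx // (le_trans _ (ltW (c_gt i))).
Qed.

Definition freiman2 (T : Type) (G R : zmodType) (g : T -> G) (w : T -> R) :=
  forall a b c d, g a + g b = g c + g d -> w a + w b = w c + w d.

Lemma freiman2_lincomb (T : Type) (G : zmodType) (R : comPzRingType) (g : T -> G)
    (u v : T -> R) c :
  freiman2 g u -> freiman2 g v -> freiman2 g (fun j => u j + c * v j).
Proof.
move=> u_freiman v_freiman a b a' b' gab.
rewrite addrACA (u_freiman _ _ _ _ gab) -mulrDr (v_freiman _ _ _ _ gab).
by rewrite mulrDr addrACA.
Qed.

Lemma freiman2_max_sum_unique (T : Type) (G : zmodType) (R : numDomainType)
    (g : T -> G) (w : T -> R) (a b i j : T) :
  freiman2 g w -> injective w -> w a <= w i -> w b <= w j ->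
  g a + g b = g i + g j -> a = i /\ b = j.
Proof.
move=> w_freiman w_inj ai bj /w_freiman /eqP.
rewrite -subr_eq0 opprD addrACA -oppr_eq0 opprD !opprB.
by rewrite paddr_eq0 ?subr_ge0 // !subr_eq0 => /andP[/eqP/w_inj -> /eqP/w_inj ->].
Qed.

Section FreimanMatrix.
Variables (G : zmodType) (n : nat) (g : 'I_n -> G).

Definition quadruple := ('I_n * 'I_n * ('I_n * 'I_n))%type.

Definition freiman_row (q : quadruple) : 'rV[int]_n :=
  let: ((a, b), (c, d)) := q in
  if g a + g b == g c + g d then
    delta_mx 0 a + delta_mx 0 b - delta_mx 0 c - delta_mx 0 d
  else 0.

Definition freiman_mx : 'M[int]_(#|{: quadruple}|, n) :=
  \matrix_(i < #|{: quadruple}|) freiman_row (enum_val i).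

Lemma row_freiman_mx q : row (enum_rank q) freiman_mx = freiman_row q.
Proof. by rewrite rowK enum_rankK. Qed.

Lemma freiman2_kernel (w : 'cV[rat]_n) :
  map_mx intr freiman_mx *m w = 0 -> freiman2 g (fun j => w j 0).
Proof.
move=> Aw0 a b c d abcd.
move/(congr1 (row (enum_rank ((a, b), (c, d))))): Aw0.
rewrite row_mul -map_row row_freiman_mx /= abcd eqxx !map_mxB map_mxD.
rewrite !map_delta_mx !mulmxBl mulmxDl -!rowE row0 => /rowP/(_ 0).
rewrite !mxE => /eqP; rewrite subr_eq0 subr_eq => /eqP ->.
exact: addrC.
Qed.

Definition zcomb (u : 'rV[int]_n) : G := \sum_j g j *~ u 0 j.

Lemma zcombD u v : zcomb (u + v) = zcomb u + zcomb v.
Proof. by rewrite -big_split; apply: eq_bigr => j _; rewrite mxE mulrzDr. Qed.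

Lemma zcombN u : zcomb (- u) = - zcomb u.
Proof. by rewrite -sumrN; apply: eq_bigr => j _; rewrite mxE mulrNz. Qed.

Lemma zcombZ z u : zcomb (z *: u) = zcomb u *~ z.
Proof. by rewrite mulrz_suml; apply: eq_bigr => j _; rewrite mxE mulrC mulrzA. Qed.

Lemma zcomb_delta a : zcomb (delta_mx 0 a) = g a.
Proof.
rewrite /zcomb (bigD1 a) //= big1 => [|j /negbTE ja]; rewrite mxE ?ja //.
by rewrite !eqxx addr0.
Qed.

Lemma zcomb_mulmx r (mu : 'rV_r) (B : 'M_(r, n)) :
  zcomb (mu *m B) = \sum_i zcomb (row i B) *~ mu 0 i.
Proof.
rewrite /zcomb; under eq_bigr => j _ do rewrite mxE mulrz_sumr.
rewrite exchange_big; apply: eq_bigr => i _; rewrite mulrz_suml.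
by apply: eq_bigr => j _; rewrite mxE mulrC mulrzA.
Qed.

Lemma zcomb_freiman_row q : zcomb (freiman_row q) = 0.
Proof.
case: q => [[a b] [c d]] /=; case: eqP => [abcd|_]; last first.
  by rewrite /zcomb big1 // => j _; rewrite mxE mulr0z.
by rewrite !(zcombD, zcombN) !zcomb_delta abcd addrAC addrK subrr.
Qed.

Lemma zcomb_mulmx_freiman_mx r (mu : 'rV_r) (f : 'I_r -> 'I_#|{: quadruple}|) :
  zcomb (mu *m rowsub f freiman_mx) = 0.
Proof.
by rewrite zcomb_mulmx big1 // => i _; rewrite row_rowsub rowK zcomb_freiman_row mul0rz.
Qed.

Lemma det_mxsub_freiman_mx_le r (f : 'I_r -> 'I_#|{: quadruple}|) (h : 'I_r -> 'I_n) :
  injective h -> `|\det (mxsub f h freiman_mx)| <= 2 ^+ r.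
Proof.
move=> h_inj.
have Some_pick c a : (Some c == [pick c' | h c' == a]) = (h c == a).
  case: pickP => [c' /eqP <-|/(_ c) -> //].
  by rewrite (inj_eq Some_inj) (inj_eq h_inj).
pose col_of (i : 'I_r) (pr : quadruple -> 'I_n) :=
  let: ((a, b), (c, d)) as q := enum_val (f i) in
  if g a + g b == g c + g d then [pick c' | h c' == pr q] else None.
suff -> : mxsub f h freiman_mx =
  incidence_mx (col_of^~ (fun q => q.1.1)) (col_of^~ (fun q => q.2.1)) +
  incidence_mx (col_of^~ (fun q => q.1.2)) (col_of^~ (fun q => q.2.2)).
  exact: det_add_incidence_mx_le.
apply/matrixP => i j; rewrite !mxE /col_of.
case: (enum_val (f i)) => [[a b] [c d]] /=; case: eqP => _; last first.
  by rewrite !mxE !subrr.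
rewrite !mxE !Some_pick !eqxx /=.
by rewrite addrACA -addrA.
Qed.

End FreimanMatrix.

Lemma freiman2_separates (G : finZmodType) n (g : 'I_n -> G) x y :
  (2 ^ n <= pdiv #|G|)%N -> g x != g y ->
  exists2 w : 'I_n -> rat, freiman2 g w & w x != w y.
Proof.
move=> small_n gxy.
set v : 'rV[int]_n := delta_mx 0 x - delta_mx 0 y.
have [vA|vNA] := boolP (map_mx intr v <= map_mx (intr : int -> rat) (freiman_mx g))%MS;
  last first.
  have [w [Aw0 vw]] := not_submx_kernel_col vNA.
  exists (fun j => w j 0); first exact: freiman2_kernel.
  apply: contraNneq vw => wxy.
  by rewrite map_mxB !map_delta_mx mulmxBl -!rowE !mxE wxy subrr.
have [r [f [h [mu [h_inj detN0 Cramer]]]]] := int_submx_Cramer vA.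
set D := \det (mxsub f h (freiman_mx g)) in detN0 Cramer.
have gxyD0 : (g x - g y) *~ D = 0.
  rewrite -(zcomb_delta g x) -(zcomb_delta g y) -zcombN -zcombD -zcombZ.
  by rewrite Cramer zcomb_mulmx_freiman_mx.
have x_neq_y : x != y by apply: contraNneq gxy => ->.
have n_gt1 : (1 < n)%N by rewrite -[n]card_ord; apply/card_gt1P; exists x, y.
have G_gt1 : (1 < #|G|)%N by apply/card_gt1P; exists (g x), (g y).
have D_le : (`|D| <= 2 ^ n)%N.
  have := det_mxsub_freiman_mx_le g f h_inj; rewrite -abszE -natrX natz lez_nat.
  move/leq_trans; apply; rewrite leq_exp2l //.
  by rewrite -[r]card_ord -[n]card_ord; apply: leq_card h_inj.
have D_coprime : coprime `|D| #|G|.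
  apply: coprime_lt_pdiv; rewrite absz_gt0 detN0 /=.
  exact: leq_ltn_trans D_le (pow2_lt_prime n_gt1 (pdiv_prime G_gt1) small_n).
by move: gxy; rewrite -subr_eq0 (coprime_card_mulrz_eq0 D_coprime gxyD0) eqxx.
Qed.

Lemma freiman2_injective (G : finZmodType) n (g : 'I_n -> G) :
  (2 ^ n <= pdiv #|G|)%N -> injective g ->
  exists2 w : 'I_n -> rat, freiman2 g w & injective w.
Proof.
move=> small_n g_inj.
pose separates (w : 'I_n -> rat) (p : 'I_n * 'I_n) := p.1 != p.2 -> w p.1 != w p.2.
suff [w w_freiman w_sep] :
    exists2 w, freiman2 g w & {in enum {: 'I_n * 'I_n}, forall p, separates w p}.
  exists w => // x y; apply: contra_eq => xy.
  by apply: (w_sep (x, y)); rewrite ?mem_enum.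
elim: (enum _) => [|p L [w1 w1_freiman w1_sep]].
  by exists (fun=> 0) => // a b c d _; rewrite addr0.
have [w2 w2_freiman w2_sep] : exists2 w2, freiman2 g w2 & separates w2 p.
  have [p12|p12] := eqVneq p.1 p.2.
    by exists w1 => //; rewrite /separates p12 eqxx.
  have [|w2 w2_freiman w2p] := @freiman2_separates _ _ g p.1 p.2 small_n.
    by rewrite (inj_eq g_inj).
  by exists w2.
have [c c_ok] := exists_scale_nonvanishing
  (fun p : 'I_n * 'I_n => w1 p.1 - w1 p.2) (fun p => w2 p.1 - w2 p.2).
exists (fun j => w1 j + c * w2 j); first exact: freiman2_lincomb.
move=> q q_pL q12; rewrite -subr_eq0 opprD addrACA -mulrBr.
apply: c_ok; rewrite !subr_eq0.
move: q_pL q12; rewrite inE => /predU1P[-> /w2_sep ->|/w1_sep w1q /w1q ->//].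
by rewrite orbT.
Qed.

Theorem lemma5p5 (G : finZmodType) (S : {set G}) :
  (1 < #|G|)%N ->
  (#|S| <= trunc_log 2 (pdiv #|G|))%N ->
  exists s : {set G} -> G,
    (forall X : {set G}, X \subset S -> X != set0 -> s X \in X) /\
    (forall X Y : {set G}, X \subset S -> X != set0 ->
                           Y \subset S -> Y != set0 ->
       forall x y : G, x \in X -> y \in Y -> x + y = s X + s Y ->
         x = s X /\ y = s Y).
Proof.
move=> _ small_S.
have pow_small : (2 ^ #|S| <= pdiv #|G|)%N.
  apply: leq_trans (trunc_logP (isT : (1 < 2)%N) (pdiv_gt0 _)).
  by rewrite leq_exp2l.
pose g : 'I_#|S| -> G := enum_val.
have [w w_freiman w_inj] := freiman2_injective pow_small (@enum_val_inj _ (mem S)).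
pose s (X : {set G}) := if [pick i | g i \in X] is Some i0
            then g [arg max_(j > i0 | g j \in X) w j]%O else 0.
have s_max X : X != set0 -> X \subset S ->
    exists i, [/\ s X = g i, g i \in X & forall j, g j \in X -> w j <= w i].
  move=> /set0Pn[x Xx] XS; rewrite /s; case: pickP => [i0 Xi0|noX].
    by case: arg_maxP => // i Xi i_max; exists i.
  have xS := subsetP XS x Xx.
  by move: (noX (enum_rank_in xS x)); rewrite /g enum_rankK_in ?Xx.
have S_enum x : x \in S -> exists i, x = g i.
  by move=> xS; exists (enum_rank_in xS x); rewrite /g enum_rankK_in.
exists s; split => [X XS X0|X Y XS X0 YS Y0 x y Xx Yy].
  by have [i [-> ]] := s_max X X0 XS.
have [i [-> _ i_max]] := s_max X X0 XS; have [j [-> _ j_max]] := s_max Y Y0 YS.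
have [a xa] := S_enum x (subsetP XS x Xx); have [b yb] := S_enum y (subsetP YS y Yy).
rewrite {}xa in Xx *; rewrite {}yb in Yy *.
by move/(freiman2_max_sum_unique w_freiman w_inj (i_max a Xx) (j_max b Yy)) => [-> ->].
Qed.
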